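(* Let $S$ be a finite set and let $\{A_1,\dots,A_k\}\subseteq M_S([0,\infty))$ be an irreducible family of nonzero pairwise commuting matrices. Let $F\subseteq\mathbb{N}^k$ be a finite set with $A_F(s,t)>0$ for all $s,t\in S$, and let $x$ be the unimodular Perron-Frobenius eigenvector of $A_F$. Then: (1)(a) $x$ is the unique non-negative vector of unit $1$-norm that is a common eigenvector of all the $A_i$; (b) $A_ix=\rho(A_i)x$ for each $i$, and each $\rho(A_i)>0$; (c) if $z\in\mathbb{C}^S$ and $A_iz=\rho(A_i)z$ for all $i$, then $z\in\mathbb{C}x$. (2) Suppose $y\in[0,\infty)^S$ is nonzero and $\lambda\in[0,\infty)^k$ satisfies $A_iy\le\lambda_iy$ (entrywise) for all $i$. (a) Then $y_s>0$ for every $s\in S$, and $\lambda_i\ge\rho(A_i)$ for all $i$. (b) If moreover $\lambda_i=\rho(A_i)$ for all $i$ and $y$ has unit $1$-norm, then $y=x$. (3) For $n\in\mathbb{N}^k$, $\rho(A^n)=\prod_{i=1}^k\rho(A_i)^{n_i}>0$.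
   Context: For $n\in\mathbb{N}^k$, $A^n=\prod_iA_i^{n_i}$, and for finite $F\subseteq\mathbb{N}^k$, $A_F=\sum_{n\in F}A^n$. The family $\{A_1,\dots,A_k\}$ is irreducible if each $A_i\neq0$ and there is a finite $F\subseteq\mathbb{N}^k$ with $A_F(s,t)>0$ for all $s,t\in S$. $\rho$ denotes spectral radius. For an irreducible non-negative matrix $B$, its unimodular Perron-Frobenius eigenvector is the unique positive eigenvector with eigenvalue $\rho(B)$ and $1$-norm $1$. *)

From HB Require Import structures.
From mathcomp Require Import all_boot all_order all_algebra.
From mathcomp Require Import complex.
From mathcomp Require Import classical_sets reals.
Set Implicit Arguments. Unset Strict Implicit. Unset Printing Implicit Defensive.
Import Order.TTheory GRing.Theory Num.Theory.
Local Open Scope ring_scope.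
Local Open Scope classical_set_scope.

Section Defs.
Variables (R : realType) (n k : nat).

Definition cmx (p q : nat) (M : 'M[R]_(p, q)) : 'M[R[i]]_(p, q) :=
  map_mx (real_complex R) M.

Definition spectral_radius (B : 'M[R]_n) : R :=
  sup [set Normc.normc z | z in [set z : R[i] | eigenvalue (cmx B) z]].

Definition nonneg_mx p q (M : 'M[R]_(p, q)) : Prop := forall s t, 0 <= M s t.

Definition norm1 (x : 'cV[R]_n) : R := \sum_(s < n) `|x s 0|.

Definition mxpowk (A : 'I_k -> 'M[R]_n) (m : {ffun 'I_k -> nat}) : 'M[R]_n :=
  \prod_(i < k) (A i) ^+ (m i).

(* A_F = sum_{m in F} A^m, F a finite subset of N^k given as a duplicate-free list *)
Definition mxsumF (A : 'I_k -> 'M[R]_n) (F : seq {ffun 'I_k -> nat}) : 'M[R]_n :=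
  \sum_(m <- F) mxpowk A m.

Definition irreducible_family (A : 'I_k -> 'M[R]_n) : Prop :=
  (forall i, A i != 0) /\
  exists F : seq {ffun 'I_k -> nat}, uniq F /\ forall s t, 0 < mxsumF A F s t.

Definition unimodular_PF_vector (B : 'M[R]_n) (x : 'cV[R]_n) : Prop :=
  (forall s, 0 < x s 0) /\ B *m x = spectral_radius B *: x /\ norm1 x = 1.

End Defs.

(* Each A_i commutes with the positive matrix A_F, so A_i x again satisfies
   A_F (A_i x) = rho(A_F) A_i x; for a positive matrix every such
   sub-eigenvector is a multiple of its Perron vector, hence x is a common
   eigenvector.  The Collatz-Wielandt bound (if M >= 0 and M v <= mu v with
   v > 0, every complex eigenvalue of M has modulus <= mu) identifies its
   eigenvalues with rho(A_i).  Conversely, inequalities A_i y <= lam_i y multiply and add up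
   to A_F y <= (sum_{m in F} prod_i lam_i^{m_i}) y, which reduces the remaining
   claims to the single positive matrix A_F; complex eigenvectors are handled
   through their real and imaginary parts. *)

From HB Require Import structures.
From mathcomp Require Import all_boot all_order all_algebra.
From mathcomp Require Import complex.
From mathcomp Require Import boolp classical_sets reals.
Set Implicit Arguments. Unset Strict Implicit. Unset Printing Implicit Defensive.
Import Order.TTheory GRing.Theory Num.Theory.
Local Open Scope ring_scope.
Local Open Scope complex_scope.

Lemma cV_neq0P (R : zmodType) n (v : 'cV[R]_n) : v != 0 -> exists s, v s 0 != 0.
Proof.
move=> v_neq0; apply/fintype.existsP; apply: contraNT v_neq0 => /existsPn v0.
by apply/eqP/matrixP => s j; rewrite ord1 mxE; apply/eqP/negbNE/v0.
Qed.

Lemma mx_neq0P (R : zmodType) m n (M : 'M[R]_(m, n)) :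
  M != 0 -> exists s t, M s t != 0.
Proof.
move=> M_neq0; suff /fintype.existsP [s /fintype.existsP [t Mst]] :
    [exists s, [exists t, M s t != 0]] by exists s, t.
apply: contraNT M_neq0 => /existsPn M0; apply/eqP/matrixP => s t; rewrite mxE.
by move/existsPn: (M0 s) => /(_ t) /negbNE /eqP.
Qed.

Lemma sum_ge_term (R : numDomainType) (I : finType) (G : I -> R) j :
  (forall i, 0 <= G i) -> G j <= \sum_i G i.
Proof. by move=> G_ge0; rewrite (bigD1 j) //= lerDl sumr_ge0. Qed.

Lemma nonneg_mxM (R : realType) m n p (M : 'M[R]_(m, n)) (N : 'M[R]_(n, p)) :
  nonneg_mx M -> nonneg_mx N -> nonneg_mx (M *m N).
Proof. by move=> M_ge0 N_ge0 s t; rewrite mxE sumr_ge0 // => u _; exact: mulr_ge0. Qed.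

Lemma mulmx_nonneg_gt0 (R : realType) m n (M : 'M[R]_(m, n)) (v : 'cV[R]_n) s t :
  nonneg_mx M -> (forall u, 0 <= v u 0) -> 0 < M s t -> 0 < v t 0 -> 0 < (M *m v) s 0.
Proof.
move=> M_ge0 v_ge0 Mst vt; apply: lt_le_trans (mulr_gt0 Mst vt) _; rewrite mxE.
by apply: (@sum_ge_term _ _ (fun u => M s u * v u 0) t) => u; exact: mulr_ge0.
Qed.

Lemma positive_mulmx_gt0 (R : realType) n (B : 'M[R]_n) (y : 'cV[R]_n) :
  (forall s t, 0 < B s t) -> (forall s, 0 <= y s 0) -> y != 0 ->
  forall s, 0 < (B *m y) s 0.
Proof.
move=> B_gt0 y_ge0 /cV_neq0P [t yt] s.
apply: (mulmx_nonneg_gt0 _ y_ge0 (B_gt0 s t)); first by move=> ? ?; exact: ltW.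
by rewrite lt_def yt y_ge0.
Qed.

Lemma norm1Z (R : realType) n (x : 'cV[R]_n) c : norm1 (c *: x) = `|c| * norm1 x.
Proof. by rewrite /norm1 mulr_sumr; apply: eq_bigr => s _; rewrite mxE normrM. Qed.

Lemma norm1_scale_eq (R : realType) n (x : 'cV[R]_n) c : (0 < n)%N ->
  (forall s, 0 < x s 0) -> (forall s, 0 <= c * x s 0) ->
  norm1 (c *: x) = 1 -> norm1 x = 1 -> c *: x = x.
Proof.
move=> n_gt0 x_gt0 cx_ge0; rewrite norm1Z => ncx nx; move: ncx.
have c_ge0 : 0 <= c by rewrite -(pmulr_lge0 _ (x_gt0 (Ordinal n_gt0))).
by rewrite nx mulr1 ger0_norm // => ->; rewrite scale1r.
Qed.

Lemma normc_real (R : rcfType) (r : R) : Normc.normc r%:C = `|r|.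
Proof. by rewrite /Normc.normc /= expr0n /= addr0 sqrtr_sqr. Qed.

Lemma normc_ge0 (R : rcfType) (z : R[i]) : 0 <= Normc.normc z.
Proof. by case: z => a b; rewrite /Normc.normc sqrtr_ge0. Qed.

Lemma normc_sum (R : rcfType) I (r : seq I) (P : pred I) (G : I -> R[i]) :
  Normc.normc (\sum_(i <- r | P i) G i) <= \sum_(i <- r | P i) Normc.normc (G i).
Proof.
elim/big_rec2: _ => [|i y1 y2 _ IH]; first by rewrite Normc.normc0.
by apply: le_trans (le_normcD _ _) _; rewrite lerD2l.
Qed.

Lemma eigenvalue_det (F : fieldType) n (M : 'M[F]_n) a :
  eigenvalue M a = (\det (a%:M - M) == 0).
Proof.
apply/eigenvalueP/det0P=> [[v Mv v_neq0] | [v v_neq0 Mv]]; exists v => //.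
  by rewrite mulmxBr Mv mul_mx_scalar subrr.
by apply/eqP; rewrite -mul_mx_scalar eq_sym -subr_eq0 -mulmxBr Mv.
Qed.

Lemma eigenvalue_trmx (F : fieldType) n (M : 'M[F]_n) a :
  eigenvalue M^T a = eigenvalue M a.
Proof. by rewrite !eigenvalue_det -det_tr linearB /= tr_scalar_mx trmxK. Qed.

Lemma eigenvalue_colP (F : fieldType) n (M : 'M[F]_n) a :
  eigenvalue M a <-> exists2 w : 'cV_n, M *m w = a *: w & w != 0.
Proof.
rewrite -eigenvalue_trmx; split.
  move=> /eigenvalueP [v Mv v_neq0]; exists v^T; last by rewrite trmx_eq0.
  by rewrite -[M]trmxK -trmx_mul Mv linearZ.
move=> [w Mw w_neq0]; apply/eigenvalueP; exists w^T; last by rewrite trmx_eq0.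
by rewrite -trmx_mul Mw linearZ.
Qed.

Section CollatzWielandt.
Variables (R : realType) (n : nat) (M : 'M[R]_n) (v : 'cV[R]_n) (mu : R).
Hypotheses (M_ge0 : nonneg_mx M) (v_gt0 : forall s, 0 < v s 0).
Hypothesis Mv_le : forall s, (M *m v) s 0 <= mu * v s 0.

(* Compare a complex eigenvector w with v at an index maximising |w_s| / v_s. *)
Lemma normc_eigenvalue_le z : eigenvalue (cmx M) z -> Normc.normc z <= mu.
Proof.
move=> /eigenvalue_colP [w Mw /cV_neq0P [t wt]].
pose ratio s := Normc.normc (w s 0) / v s 0.
have [s0 _ ratio_max] := @arg_maxP _ R _ t xpredT ratio erefl.
set c := ratio s0 in ratio_max.
have w_le s : Normc.normc (w s 0) <= c * v s 0.
  by rewrite -ler_pdivrMr //; exact: ratio_max.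
have c_gt0 : 0 < c.
  apply: lt_le_trans (ratio_max t _) => //; rewrite divr_gt0 // lt_def normc_ge0.
  by rewrite andbT; apply: contra wt => /eqP /Normc.eq0_normc ->.
have ws0 : Normc.normc (w s0 0) = c * v s0 0 by rewrite /c /ratio divfK ?gt_eqF.
have ws0_gt0 : 0 < Normc.normc (w s0 0) by rewrite ws0 mulr_gt0.
rewrite -(ler_pM2r ws0_gt0) -Normc.normcM.
have -> : z * w s0 0 = (cmx M *m w) s0 0 by rewrite Mw mxE.
rewrite mxE; apply: le_trans (normc_sum _ _ _) _.
apply: (@le_trans _ _ (c * (M *m v) s0 0)).
  rewrite mxE mulr_sumr; apply: ler_sum => j _.
  rewrite Normc.normcM /cmx mxE normc_real ger0_norm // mulrCA.
  by apply: ler_wpM2l; [exact: M_ge0 | exact: w_le].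
by rewrite ws0 mulrCA; apply: ler_wpM2l (Mv_le s0); exact: ltW.
Qed.

(* The empty case matters: [sup set0 = 0], hence the hypothesis [0 <= mu]. *)
Lemma spectral_radius_le : 0 <= mu -> spectral_radius M <= mu.
Proof.
move=> mu_ge0; rewrite /spectral_radius; set S := (X in sup X).
have S_ub : ubound S mu by move=> y [z Mz <-]; exact: normc_eigenvalue_le.
have [S_sup|S_nsup] := pselect (has_sup S); first exact: ge_sup S_sup.1 S_ub.
by rewrite sup_out.
Qed.

End CollatzWielandt.

Lemma spectral_radius_eigenvector (R : realType) n (M : 'M[R]_n) (v : 'cV[R]_n) mu :
  (0 < n)%N -> nonneg_mx M -> (forall s, 0 < v s 0) -> M *m v = mu *: v ->
  spectral_radius M = mu.
Proof.
move=> n_gt0 M_ge0 v_gt0 Mv; pose s0 := Ordinal n_gt0.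
have mu_ge0 : 0 <= mu.
  have : 0 <= (M *m v) s0 0.
    by apply: nonneg_mxM => // s j; rewrite ord1; exact: ltW.
  by rewrite Mv mxE pmulr_lge0.
have Mv_le s : (M *m v) s 0 <= mu * v s 0 by rewrite Mv mxE.
apply/le_anti; rewrite (spectral_radius_le M_ge0 v_gt0) //=.
have mu_eig : eigenvalue (cmx M) mu%:C.
  rewrite /cmx eigenvalue_map; apply/eigenvalue_colP; exists v => //.
  by apply: contraTneq (v_gt0 s0) => ->; rewrite mxE ltxx.
apply: sup_upper_bound; last by exists mu%:C; rewrite ?normc_real ?ger0_norm.
split; first by exists mu, mu%:C; rewrite ?normc_real ?ger0_norm.
by exists mu => y [z Mz <-]; exact: normc_eigenvalue_le Mz.
Qed.

(* The minimum ratio c = u_s0 / x_s0 gives d = u - c x >= 0 with (B d)_s0 <= 0;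
   positivity of B forces d = 0. *)
Lemma positive_mx_subeigenvector (R : realType) n (B : 'M[R]_n) (x u : 'cV[R]_n) r :
  (0 < n)%N -> (forall s t, 0 < B s t) -> (forall s, 0 < x s 0) -> B *m x = r *: x ->
  (forall s, (B *m u) s 0 <= r * u s 0) -> exists c, u = c *: x.
Proof.
move=> n_gt0 B_gt0 x_gt0 Bx Bu_le.
pose ratio s := u s 0 / x s 0.
have [s0 _ ratio_min] := @arg_minP _ R _ (Ordinal n_gt0) xpredT ratio erefl.
set c := ratio s0 in ratio_min; exists c.
pose d := u - c *: x.
have d_ge0 t : 0 <= d t 0.
  by rewrite !mxE subr_ge0 -ler_pdivlMr //; exact: ratio_min.
have us0 : u s0 0 = c * x s0 0 by rewrite /c /ratio divfK ?gt_eqF.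
have Bd_le0 : (B *m d) s0 0 <= 0.
  have -> : (B *m d) s0 0 = (B *m u) s0 0 - c * (r * x s0 0).
    by rewrite mulmxBr -scalemxAr Bx !mxE.
  by rewrite subr_le0 mulrCA -us0; exact: Bu_le.
have Bd_ge0 : 0 <= (B *m d) s0 0.
  by apply: nonneg_mxM => [s t|s j]; rewrite ?ord1 // ltW.
have : (B *m d) s0 0 = 0 by apply/le_anti; rewrite Bd_le0 Bd_ge0.
rewrite mxE => /psumr_eq0P Bd0.
apply/matrixP => t j; rewrite ord1; apply/eqP; rewrite -subr_eq0.
have /eqP : B s0 t * d t 0 = 0 by apply: Bd0 => // i _; rewrite mulr_ge0 ?d_ge0 // ltW.
by rewrite mulf_eq0 gt_eqF ?B_gt0 //= /d !mxE.
Qed.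

Section EigenvectorAlgebra.
Variables (R : comNzRingType) (n : nat) (v : 'cV[R]_n).

Lemma eigenvectorM (M N : 'M[R]_n) a b :
  M *m v = a *: v -> N *m v = b *: v -> (M * N) *m v = (a * b) *: v.
Proof.
by move=> Mv Nv; rewrite -mulmxE -mulmxA Nv -scalemxAr Mv scalerA mulrC.
Qed.

Lemma eigenvectorD (M N : 'M[R]_n) a b :
  M *m v = a *: v -> N *m v = b *: v -> (M + N) *m v = (a + b) *: v.
Proof. by move=> Mv Nv; rewrite mulmxDl Mv Nv scalerDl. Qed.

Lemma eigenvectorX (M : 'M[R]_n) a m : M *m v = a *: v -> M ^+ m *m v = a ^+ m *: v.
Proof.
move=> Mv; elim: m => [|m IHm]; first by rewrite !expr0 mul1mx scale1r.
by rewrite !exprS; exact: eigenvectorM.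
Qed.

End EigenvectorAlgebra.

Section Subeigenvector.
Variables (R : realType) (n : nat) (y : 'cV[R]_n).

(* Bundling [M >= 0] and [c >= 0] makes the relation closed under products. *)
Definition subeigen (M : 'M[R]_n) (c : R) :=
  [/\ nonneg_mx M, 0 <= c & forall s, (M *m y) s 0 <= c * y s 0].

Lemma subeigen1 : subeigen 1 1.
Proof.
split=> [s t||s]; [by rewrite mxE ler0n | exact: ler01 | by rewrite mul1mx mul1r].
Qed.

Lemma subeigen0 : subeigen 0 0.
Proof. by split=> [s t||s]; rewrite ?mul0mx ?mxE ?mul0r. Qed.

Lemma subeigenM M N a b : subeigen M a -> subeigen N b -> subeigen (M * N) (a * b).
Proof.
move=> [M_ge0 a_ge0 My] [N_ge0 b_ge0 Ny]; split; rewrite -?mulmxE.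
- exact: nonneg_mxM.
- exact: mulr_ge0.
move=> s; apply: (@le_trans _ _ (b * (M *m y) s 0)).
  rewrite -mulmxA [X in X <= _]mxE [(M *m y) s 0]mxE mulr_sumr.
  by apply: ler_sum => u _; rewrite mulrCA; exact: ler_wpM2l.
by rewrite [a * b]mulrC -mulrA; exact: ler_wpM2l.
Qed.

Lemma subeigenD M N a b : subeigen M a -> subeigen N b -> subeigen (M + N) (a + b).
Proof.
move=> [M_ge0 a_ge0 My] [N_ge0 b_ge0 Ny]; split=> [s t||s].
- by rewrite mxE addr_ge0.
- exact: addr_ge0.
- by rewrite mulmxDl mxE mulrDl lerD.
Qed.

Lemma subeigenX M a m : subeigen M a -> subeigen (M ^+ m) (a ^+ m).
Proof.
move=> Ma; elim: m => [|m IHm]; first by rewrite !expr0; exact: subeigen1.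
by rewrite !exprS; exact: subeigenM.
Qed.

End Subeigenvector.

Section FamilyProducts.
Variables (R : realType) (n k : nat) (A : 'I_k -> 'M[R]_n).

Lemma mxpowk_eigenvector (v : 'cV[R]_n) (mu : 'I_k -> R) m :
  (forall i, A i *m v = mu i *: v) ->
  mxpowk A m *m v = (\prod_(i < k) mu i ^+ m i) *: v.
Proof.
move=> Av; apply: (big_ind2 (fun M a => M *m v = a *: v)) => [|M N a b|i _].
- by rewrite mul1mx scale1r.
- exact: eigenvectorM.
- exact: eigenvectorX.
Qed.

Lemma mxsumF_eigenvector (v : 'cV[R]_n) (mu : 'I_k -> R) F :
  (forall i, A i *m v = mu i *: v) ->
  mxsumF A F *m v = (\sum_(m <- F) \prod_(i < k) mu i ^+ m i) *: v.
Proof.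
move=> Av; apply: (big_ind2 (fun M a => M *m v = a *: v)) => [|M N a b|m _].
- by rewrite mul0mx scale0r.
- exact: eigenvectorD.
- exact: mxpowk_eigenvector.
Qed.

Lemma mxpowk_subeigen (y : 'cV[R]_n) (lam : 'I_k -> R) m :
  (forall i, subeigen y (A i) (lam i)) ->
  subeigen y (mxpowk A m) (\prod_(i < k) lam i ^+ m i).
Proof.
move=> Ay; apply: (big_ind2 (subeigen y)) => [|M N a b|i _]; first exact: subeigen1.
  exact: subeigenM.
exact: subeigenX.
Qed.

Lemma mxsumF_subeigen (y : 'cV[R]_n) (lam : 'I_k -> R) F :
  (forall i, subeigen y (A i) (lam i)) ->
  subeigen y (mxsumF A F) (\sum_(m <- F) \prod_(i < k) lam i ^+ m i).
Proof.
move=> Ay; apply: (big_ind2 (subeigen y)) => [|M N a b|m _]; first exact: subeigen0.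
  exact: subeigenD.
exact: mxpowk_subeigen.
Qed.

End FamilyProducts.

Lemma map_cmx_eigenvector (R : realType) n (M : 'M[R]_n) (z : 'cV[R[i]]_n) r
    (f : R[i] -> R) :
  {morph f : a b / a + b} -> f 0 = 0 -> (forall (c : R) w, f (c%:C * w) = c * f w) ->
  cmx M *m z = r%:C *: z -> M *m map_mx f z = r *: map_mx f z.
Proof.
move=> fD f0 fZ Mz; apply/matrixP => s j; rewrite ord1 !mxE.
under eq_bigr do rewrite mxE.
move/matrixP/(_ s 0)/(congr1 f): Mz; rewrite !mxE (big_morph f fD f0) fZ.
by under eq_bigr do rewrite mxE fZ.
Qed.

Lemma map_cmx_Re_eigenvector (R : realType) n (M : 'M[R]_n) (z : 'cV[R[i]]_n) r :
  cmx M *m z = r%:C *: z -> M *m map_mx (@complex.Re R) z = r *: map_mx (@complex.Re R) z.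
Proof.
by apply: map_cmx_eigenvector => // [[a b] [c d]|c [a b]] //=; rewrite !mul0r subr0.
Qed.

Lemma map_cmx_Im_eigenvector (R : realType) n (M : 'M[R]_n) (z : 'cV[R[i]]_n) r :
  cmx M *m z = r%:C *: z -> M *m map_mx (@complex.Im R) z = r *: map_mx (@complex.Im R) z.
Proof.
by apply: map_cmx_eigenvector => // [[a b] [c d]|c [a b]] //=; rewrite !mul0r addr0.
Qed.

Section IrreducibleCommutingFamily.
Variables (R : realType) (n k : nat) (A : 'I_k -> 'M[R]_n).
Variables (F : seq {ffun 'I_k -> nat}) (x : 'cV[R]_n).
Hypotheses (A_ge0 : forall i, nonneg_mx (A i)) (A_neq0 : forall i, A i != 0).
Hypothesis A_comm : forall i j, A i *m A j = A j *m A i.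
Hypothesis AF_gt0 : forall s t, 0 < mxsumF A F s t.
Hypothesis x_PF : unimodular_PF_vector (mxsumF A F) x.

Local Notation AF := (mxsumF A F).
Local Notation rho := spectral_radius.

Let x_gt0 s : 0 < x s 0. Proof. by case: x_PF. Qed.
Let AF_x : AF *m x = rho AF *: x. Proof. by case: x_PF => _ []. Qed.
Let norm1_x : norm1 x = 1. Proof. by case: x_PF => _ []. Qed.
Let AF_ge0 : nonneg_mx AF. Proof. by move=> s t; exact: ltW. Qed.

Let dim_gt0 : (0 < n)%N.
Proof.
by case: n x norm1_x => // y; rewrite /norm1 big_ord0 => /eqP; rewrite eq_sym oner_eq0.
Qed.

Lemma PF_subeigenvector (u : 'cV[R]_n) :
  (forall s, (AF *m u) s 0 <= rho AF * u s 0) -> exists c, u = c *: x.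
Proof. exact: positive_mx_subeigenvector dim_gt0 AF_gt0 x_gt0 AF_x. Qed.

Lemma mxsumF_commute i : A i *m AF = AF *m A i.
Proof.
rewrite !mulmxE; apply: commr_sum => m _; apply: commr_prod => j _.
by apply: commrX; rewrite /GRing.comm -!mulmxE A_comm.
Qed.

Lemma PF_common_eigenvector i : A i *m x = rho (A i) *: x.
Proof.
have [c Ax] : exists c, A i *m x = c *: x.
  apply: PF_subeigenvector => s.
  by rewrite mulmxA -mxsumF_commute -mulmxA AF_x -scalemxAr !mxE.
by rewrite (spectral_radius_eigenvector dim_gt0 (A_ge0 i) x_gt0 Ax).
Qed.

Lemma spectral_radius_gt0 i : 0 < rho (A i).
Proof.
have [s [t Ast_neq0]] := mx_neq0P (A_neq0 i).
have Ast : 0 < A i s t by rewrite lt_def Ast_neq0 A_ge0.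
have := mulmx_nonneg_gt0 (A_ge0 i) (fun u => ltW (x_gt0 u)) Ast (x_gt0 t).
by rewrite PF_common_eigenvector mxE pmulr_lgt0.
Qed.

Lemma spectral_radius_mxsumF : rho AF = \sum_(m <- F) \prod_(i < k) rho (A i) ^+ m i.
Proof.
apply: spectral_radius_eigenvector dim_gt0 AF_ge0 x_gt0 _.
exact: mxsumF_eigenvector PF_common_eigenvector.
Qed.

Lemma spectral_radius_mxpowk m : rho (mxpowk A m) = \prod_(i < k) rho (A i) ^+ m i.
Proof.
have [Am_ge0 _ _] : subeigen x (mxpowk A m) (\prod_(i < k) rho (A i) ^+ m i).
  apply: mxpowk_subeigen => i; split=> [||s]; rewrite ?PF_common_eigenvector ?mxE //.
  exact: ltW (spectral_radius_gt0 i).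
apply: spectral_radius_eigenvector dim_gt0 Am_ge0 x_gt0 _.
exact: mxpowk_eigenvector PF_common_eigenvector.
Qed.

Section CommonSubeigenvector.
Variables (y : 'cV[R]_n) (lam : 'I_k -> R).
Hypotheses (y_ge0 : forall s, 0 <= y s 0) (A_subeigen : forall i, subeigen y (A i) (lam i)).

Let AF_subeigen := mxsumF_subeigen F A_subeigen.

Lemma common_subeigenvector_gt0 : y != 0 -> forall s, 0 < y s 0.
Proof.
move=> y_neq0 s; have [_ _ AFy_le] := AF_subeigen.
have AFy_gt0 := lt_le_trans (positive_mulmx_gt0 AF_gt0 y_ge0 y_neq0 s) (AFy_le s).
rewrite lt_def y_ge0 andbT; apply: contraTneq AFy_gt0 => ->.
by rewrite mulr0 ltxx.
Qed.

Lemma spectral_radius_le_subeigenvalue : y != 0 -> forall i, rho (A i) <= lam i.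
Proof.
move=> y_neq0 i; have [Ai_ge0 lam_ge0 Ay_le] := A_subeigen i.
exact: spectral_radius_le Ai_ge0 (common_subeigenvector_gt0 y_neq0) Ay_le lam_ge0.
Qed.

Lemma common_subeigenvector_PF :
  (forall i, lam i = rho (A i)) -> norm1 y = 1 -> y = x.
Proof.
move=> lam_rho norm1_y; have [_ _ AFy_le] := AF_subeigen.
have [c y_cx] : exists c, y = c *: x.
  apply: PF_subeigenvector => s; rewrite spectral_radius_mxsumF.
  by under eq_bigr do under eq_bigr do rewrite -lam_rho.
move: y_ge0 norm1_y; rewrite y_cx => cx_ge0 norm1_cx.
apply: norm1_scale_eq dim_gt0 x_gt0 _ norm1_cx norm1_x => s.
by have := cx_ge0 s; rewrite mxE.
Qed.

End CommonSubeigenvector.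

Lemma common_eigenvector_PF (y : 'cV[R]_n) :
  (forall s, 0 <= y s 0) -> norm1 y = 1 ->
  (forall i, exists mu, A i *m y = mu *: y) -> y = x.
Proof.
move=> y_ge0 norm1_y /fin_all_exists [mu Ay].
have y_neq0 : y != 0.
  apply: contra_eq_neq norm1_y => ->; rewrite /norm1 big1 1?eq_sym ?oner_neq0 //.
  by move=> s _; rewrite mxE normr0.
have mu_ge0 i : 0 <= mu i.
  have [t /negPf yt] := cV_neq0P y_neq0.
  have : 0 <= (A i *m y) t 0 by apply: nonneg_mxM => // s j; rewrite ord1.
  by rewrite Ay mxE pmulr_lge0 // lt_def yt y_ge0.
have A_subeigen i : subeigen y (A i) (mu i) by split=> // s; rewrite Ay mxE.
have y_gt0 := common_subeigenvector_gt0 y_ge0 A_subeigen y_neq0.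
apply: (common_subeigenvector_PF y_ge0 A_subeigen) => // i.
by rewrite (spectral_radius_eigenvector dim_gt0 (A_ge0 i) y_gt0 (Ay i)).
Qed.

Lemma complex_common_eigenvector (z : 'cV[R[i]]_n) :
  (forall i, cmx (A i) *m z = (rho (A i))%:C *: z) -> exists c, z = c *: cmx x.
Proof.
move=> Az.
have PF_part (f : R[i] -> R) :
    (forall i, A i *m map_mx f z = rho (A i) *: map_mx f z) ->
    exists c, map_mx f z = c *: x.
  move=> Afz; apply: PF_subeigenvector => s.
  by rewrite (mxsumF_eigenvector _ Afz) spectral_radius_mxsumF mxE.
have [a za] := PF_part _ (fun i => map_cmx_Re_eigenvector (Az i)).
have [b zb] := PF_part _ (fun i => map_cmx_Im_eigenvector (Az i)).
exists (a +i* b); apply/matrixP => s j; rewrite ord1 !mxE.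
move/matrixP/(_ s 0): za; move/matrixP/(_ s 0): zb; rewrite !mxE.
by case: (z s 0) => p q /= -> ->; simpc.
Qed.

End IrreducibleCommutingFamily.

Theorem proposition3p1 (R : realType) (n k : nat)
  (A : 'I_k -> 'M[R]_n)
  (hnonneg : forall i, nonneg_mx (A i))
  (hirr : irreducible_family A)
  (hcomm : forall i j, A i *m A j = A j *m A i)
  (F : seq {ffun 'I_k -> nat}) (hFu : uniq F)
  (hF : forall s t, 0 < mxsumF A F s t)
  (x : 'cV[R]_n) (hx : unimodular_PF_vector (mxsumF A F) x) :
  (* (1)(a) *)
  ((forall i, exists mu : R, A i *m x = mu *: x) /\
   (forall y : 'cV[R]_n, (forall s, 0 <= y s 0) -> norm1 y = 1 ->
      (forall i, exists mu : R, A i *m y = mu *: y) -> y = x)) /\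
  (* (1)(b) *)
  (forall i, A i *m x = spectral_radius (A i) *: x /\ 0 < spectral_radius (A i)) /\
  (* (1)(c) *)
  (forall z : 'cV[R[i]]_n,
      (forall i, cmx (A i) *m z = real_complex R (spectral_radius (A i)) *: z) ->
      exists c : R[i], z = c *: cmx x) /\
  (* (2) *)
  (forall (y : 'cV[R]_n) (lam : 'I_k -> R),
      (forall s, 0 <= y s 0) -> y != 0 -> (forall i, 0 <= lam i) ->
      (forall i s, (A i *m y) s 0 <= lam i * y s 0) ->
      ((forall s, 0 < y s 0) /\ (forall i, spectral_radius (A i) <= lam i)) /\
      ((forall i, lam i = spectral_radius (A i)) -> norm1 y = 1 -> y = x)) /\
  (* (3) *)
  (forall m : {ffun 'I_k -> nat},
      spectral_radius (mxpowk A m) = \prod_(i < k) spectral_radius (A i) ^+ m i /\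
      0 < spectral_radius (mxpowk A m)).
Proof.
have A_neq0 := hirr.1.
have rho_gt0 := spectral_radius_gt0 hnonneg A_neq0 hcomm hF hx.
have Ax := PF_common_eigenvector hnonneg hcomm hF hx.
split; [split=> [i|]|]; first by exists (spectral_radius (A i)); exact: Ax.
  exact: common_eigenvector_PF hnonneg hcomm hF hx.
split; first by move=> i; split; [exact: Ax | exact: rho_gt0].
split; first exact: complex_common_eigenvector hnonneg hcomm hF hx.
split=> [y lam y_ge0 y_neq0 lam_ge0 Ay_le|m].
  have A_subeigen i : subeigen y (A i) (lam i) by split.
  split; last exact: (common_subeigenvector_PF hnonneg hcomm hF hx y_ge0 A_subeigen).
  split; first exact: (common_subeigenvector_gt0 hF y_ge0 A_subeigen y_neq0).
  exact: (spectral_radius_le_subeigenvalue hF y_ge0 A_subeigen y_neq0).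
rewrite (spectral_radius_mxpowk hnonneg A_neq0 hcomm hF hx).
by split=> //; apply: prodr_gt0 => i _; exact: exprn_gt0.
Qed.
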